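(* Let $k,r\in\mathbb{N}$ and let $M_1,\dots,M_k$ be matchings (in a common undirected graph) with $\Delta\big(\bigcup_{i\in[k]}M_i\big)\leq r$. Suppose $e(M_i)>2(r^3+r)^2\ln k$ for all $i\in[k]$. Then there exists a matching $H\subseteq\bigcup_{i\in[k]}M_i$ with $|E(H)\cap M_i|\geq e(M_i)/(r^2+1)$ for all $i\in[k]$.
   Context: A matching is a set of edges no two of which share a vertex; $\Delta$ denotes maximum degree of the undirected graph formed by the union of the edge sets. *)

From mathcomp Require Import all_boot all_order all_algebra.
From mathcomp Require Import all_classical all_reals all_analysis.
Set Implicit Arguments. Unset Strict Implicit. Unset Printing Implicit Defensive.

(* Simple undirected graphs on a finite vertex type T: an edge is a
   2-element vertex set, an edge set is a {set {set T}}. *)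

Definition is_edge_set (T : finType) (E : {set {set T}}) : Prop :=
  forall e, e \in E -> #|e| = 2%N.

Definition is_matching (T : finType) (M : {set {set T}}) : Prop :=
  is_edge_set M /\
  forall e f, e \in M -> f \in M -> e != f -> [disjoint e & f].

Definition deg (T : finType) (E : {set {set T}}) (v : T) : nat :=
  #|[set e in E | v \in e]|.

Definition max_deg_le (T : finType) (E : {set {set T}}) (r : nat) : Prop :=
  forall v, (deg E v <= r)%N.

(* Every vertex chooses one of r slots uniformly at random, the edges at a
   vertex occupying distinct slots, and an edge is kept when both endpoints
   choose it.  The kept edges form a matching.  Inside a matching M_i the
   events "e is kept" are independent of probability 1/r^2, so an exponential
   moment bound with parameter 1/(r^2+1) shows that fewer than
   e(M_i)/(r^2+1) edges of M_i are kept with probability at most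
   exp(-e(M_i)/(2(r^3+r)^2)) < 1/k.  A union bound over the k matchings
   leaves a good choice. *)

From mathcomp Require Import all_boot all_order all_algebra.
From mathcomp Require Import all_classical all_reals all_analysis.
From mathcomp Require Import ring lra.
Set Implicit Arguments. Unset Strict Implicit. Unset Printing Implicit Defensive.
Import Order.TTheory GRing.Theory Num.Theory numFieldNormedType.Exports.
Local Open Scope ring_scope.

Section ExpBounds.
Variable R : realType.

Lemma expR_ge_taylor2 (x : R) : 0 <= x -> 1 + x + x ^+ 2 / 2 <= expR x.
Proof.
move=> x_ge0; rewrite /expR.
pose f i := exp_coeff x i *+ (i < 3)%N.
have sum_f m : (2 < m)%N -> \sum_(0 <= i < m) f i = 1 + x + x ^+ 2 / 2.
  move=> m_gt2; rewrite (@big_cat_nat _ _ _ 3) //=.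
  have -> : \sum_(3 <= i < m) f i = 0.
    by rewrite big_nat_cond big1 // => i /andP[/andP[i_ge3 _] _]; rewrite /f ltnNge i_ge3.
  rewrite addr0 !big_nat_recl // big_geq // /f /exp_coeff /=.
  by rewrite !mulr1n expr0 expr1 !divr1 addr0 addrA.
rewrite [leLHS](_ : _ = limn (series f)); last first.
  by apply/esym/lim_near_cst => //; near=> m; apply: sum_f; near: m.
apply: ler_lim.
- by apply: is_cvg_near_cst; near=> m; apply: sum_f; near: m.
- exact: is_cvg_series_exp_coeff.
near=> m; apply: ler_sum => i _; rewrite /f.
by case: (i < 3)%N; rewrite ?mulr1n ?mulr0n // exp_coeff_ge0.
Unshelve. all: by end_near. Qed.

Lemma expRN_le_taylor2 (d : R) : 0 <= d -> expR (- d) <= 1 - d + d ^+ 2 / 2.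
Proof.
move=> d_ge0; rewrite expRN -(ler_pM2l (expR_gt0 d)) mulfV ?gt_eqF ?expR_gt0 //.
have := expR_ge_taylor2 d_ge0.
have : 0 <= d ^+ 2 * d ^+ 2 by rewrite mulr_ge0 ?sqr_ge0.
have : 0 <= (d - 1) ^+ 2 by rewrite sqr_ge0.
rewrite !expr2; nra.
Qed.

(* The exponential moment bound for [m] independent events of probability
   [rho^-1] at threshold [m / (rho + 1)], with parameter [(rho + 1)^-1]; the
   constant [2] is exactly what [expRN_le_taylor2] affords. *)
Lemma chernoff_exponent_le (rho : R) (m : nat) : 1 <= rho ->
  expR (m%:R / (rho + 1) ^+ 2) * (1 + (expR (- (rho + 1)^-1) - 1) / rho) ^+ m
  <= expR (- (m%:R / (2 * rho * (rho + 1) ^+ 2))).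
Proof.
move=> rho_ge1; set d := (rho + 1)^-1; set q := expR (- d).
have d_gt0 : 0 < d by rewrite invr_gt0; lra.
have rho_d : rho * d = 1 - d by rewrite /d; field; lra.
have q_le : q <= 1 - d + d ^+ 2 / 2 := expRN_le_taylor2 (ltW d_gt0).
set y := (1 - q) / rho.
have -> : 1 + (q - 1) / rho = 1 - y by rewrite /y; field; lra.
have q_gt0 : 0 < q := expR_gt0 _.
have y_le1 : 0 <= 1 - y by rewrite subr_ge0 /y ler_pdivrMr; lra.
have pow_le : (1 - y) ^+ m <= expR (- y) ^+ m.
  by apply: lerXn2r; rewrite ?nnegrE ?expR_ge0 //; have := expR_ge1Dx (- y); lra.
apply: le_trans (ler_wpM2l (expR_ge0 _) pow_le) _.
rewrite -expRM_natl -expRD ler_expR.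
have y_ge : d ^+ 2 + d ^+ 2 / (2 * rho) <= y.
  rewrite /y ler_pdivlMr; last lra.
  have -> : (d ^+ 2 + d ^+ 2 / (2 * rho)) * rho = rho * d * d + d ^+ 2 / 2.
    by field; lra.
  by rewrite rho_d; rewrite !expr2 in q_le *; lra.
have -> : m%:R / (rho + 1) ^+ 2 = m%:R * d ^+ 2 by rewrite /d; field; lra.
have -> : m%:R / (2 * rho * (rho + 1) ^+ 2) = m%:R * (d ^+ 2 / (2 * rho)).
  by rewrite /d; field; lra.
have m_ge0 : 0 <= (m%:R : R) by [].
rewrite !expr2 in y_ge *; nra.
Qed.

Lemma expRN_div_lt_inv (c m x : R) : 0 < c -> 0 < x -> c * ln x < m ->
  expR (- (m / c)) < x^-1.
Proof.
move=> c_gt0 x_gt0 cx_lt_m.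
rewrite -[in ltRHS](lnK (x_gt0 : x \is Num.pos)) -expRN ltr_expR ltrN2.
by rewrite ltr_pdivlMr // mulrC.
Qed.

End ExpBounds.

Lemma card_lt_le_expR_sum (R : realType) (A : finType) (X : A -> nat) (c d : R) :
  0 <= d -> #|[set a | (X a)%:R < c]|%:R <= expR (d * c) * \sum_a expR (- d) ^+ X a.
Proof.
move=> d_ge0; rewrite -sum1_card natr_sum big_mkcond mulr_sumr /=.
apply: ler_sum => a _; rewrite inE; case: ifP => [Xa_lt|_]; last first.
  by rewrite mulr_ge0 ?exprn_ge0 ?expR_ge0.
rewrite -expRM_natl -expRD -[leLHS]expR0 ler_expR mulrN mulrC subr_ge0.
by rewrite ler_wpM2r // ltW.
Qed.

Section UniformLabelings.
Variables (R : realType) (T J : finType).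
Hypothesis J_gt0 : (0 < #|J|)%N.
Local Notation Om := {ffun T -> J}.

Let Om_gt0 : 0 < #|Om|%:R :> R.
Proof. by rewrite ltr0n card_ffun expn_gt0 J_gt0. Qed.

Definition splice (A : {set T}) (f g : Om) : Om :=
  [ffun x => if x \in A then f x else g x].

(* Swapping the parts of [f] and [g] outside [A] is an involution of
   [Om * Om] that separates the two factors. *)
Lemma sum_mul_indep (A : {set T}) (F G : Om -> R) :
  (forall f g : Om, {in A, f =1 g} -> F f = F g) ->
  (forall f g : Om, {in ~: A, f =1 g} -> G f = G g) ->
  #|Om|%:R * \sum_f F f * G f = (\sum_f F f) * (\sum_f G f).
Proof.
move=> F_loc G_loc.
transitivity (\sum_(f : Om) \sum_(g : Om) F (splice A f g) * G (splice A f g)).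
  pose sw (p : Om * Om) := (splice A p.1 p.2, splice A p.2 p.1).
  have swK : involutive sw.
    by move=> [f g]; congr (_, _); apply/ffunP => x; rewrite !ffunE; case: (x \in A).
  rewrite pair_bigA /=; transitivity (\sum_(p : Om * Om) F p.1 * G p.1).
    rewrite -(pair_bigA _ (fun f g => F f * G f)) mulr_sumr /=.
    by apply: eq_bigr => f _; rewrite sumr_const card_ffun mulr_natl.
  by rewrite (reindex_inj (inv_inj swK)).
rewrite big_distrl; apply: eq_bigr => f _; rewrite big_distrr; apply: eq_bigr => g _.
congr (_ * _); first by apply: F_loc => x xA; rewrite ffunE xA.
by apply: G_loc => x; rewrite inE => /negbTE xA; rewrite ffunE xA.
Qed.

Lemma sum_prod_indep (S : {set {set T}}) (g : {set T} -> Om -> R) :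
  {in S &, forall e e' : {set T}, e != e' -> [disjoint e & e']} ->
  (forall e (f f' : Om), e \in S -> {in e, f =1 f'} -> g e f = g e f') ->
  \sum_f \prod_(e in S) g e f = #|Om|%:R * \prod_(e in S) ((\sum_f g e f) / #|Om|%:R).
Proof.
have [n] := ubnP #|S|; elim: n S => // n IH S S_lt S_triv g_loc.
have [->|[e eS]] := set_0Vmem S.
  by rewrite big_set0 mulr1; under eq_bigr do rewrite big_set0; rewrite sumr_const.
have S'_triv : {in S :\ e &, forall e1 e2 : {set T}, e1 != e2 -> [disjoint e1 & e2]}.
  by apply: sub_in2 S_triv => e1 /setD1P[].
have S'_lt : (#|S :\ e| < n)%N by move: S_lt; rewrite (cardsD1 e S) eS ltnS.
apply: (mulfI (lt0r_neq0 Om_gt0)).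
rewrite (eq_bigr (fun f => g e f * \prod_(e' in S :\ e) g e' f)); last first.
  by move=> f _; rewrite (big_setD1 e eS).
rewrite (big_setD1 e eS) /= (@sum_mul_indep e); first last.
- move=> f f' ff'; apply: eq_bigr => e' /setD1P [e'_neq e'S].
  apply: g_loc => // x xe'; apply: ff'; rewrite inE.
  by rewrite (disjointFr (S_triv e' e e'S eS e'_neq) xe').
- by move=> f f' ff'; apply: g_loc.
rewrite IH //; last by move=> e' f f' /setD1P[_]; apply: g_loc.
by rewrite mulrCA; congr (_ * _); rewrite mulrA (mulrC #|Om|%:R) divfK ?lt0r_neq0.
Qed.

Lemma sum_agree (e : {set T}) (t : T -> J) :
  \sum_(f : Om) ([forall x in e, f x == t x] : bool)%:R = #|Om|%:R / #|J|%:R ^+ #|e| :> R.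
Proof.
have J_neq0 : (#|J|%:R : R) != 0 by rewrite pnatr_eq0 -lt0n.
pose h x j : R := if x \in e then (j == t x)%:R else 1.
transitivity (\prod_x \sum_j h x j).
  rewrite bigA_distr_bigA; apply: eq_bigr => f _.
  have [/forall_inP agree | /forall_inPn [x xe fx_neq]] := boolP [forall x in e, f x == t x].
    by rewrite big1 // => x _; rewrite /h; case: ifP => // xe; rewrite agree.
  by rewrite (bigD1 x) //= /h xe (negbTE fx_neq) mul0r.
transitivity (\prod_x (#|J|%:R * if x \in e then #|J|%:R^-1 else 1) : R).
  apply: eq_bigr => x _; rewrite /h; case: ifP => xe; last by rewrite sumr_const mulr1.
  by rewrite (bigD1 (t x)) //= eqxx big1 ?addr0 ?mulfV // => j /negbTE ->.
by rewrite big_split /= -big_mkcond /= !prodr_const card_ffun natrX exprVn.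
Qed.

Definition selects (t : {set T} -> T -> J) (f : Om) (e : {set T}) : bool :=
  [forall x in e, f x == t e x].

Lemma sum_pow_selects (t : {set T} -> T -> J) (S : {set {set T}}) (s : nat) (q : R) :
  {in S &, forall e e' : {set T}, e != e' -> [disjoint e & e']} ->
  (forall e, e \in S -> #|e| = s) ->
  \sum_(f : Om) q ^+ #|[set e in S | selects t f e]|
    = #|Om|%:R * (1 + (q - 1) / #|J|%:R ^+ s) ^+ #|S|.
Proof.
move=> S_triv S_card.
have -> : \sum_(f : Om) q ^+ #|[set e in S | selects t f e]|
          = \sum_(f : Om) \prod_(e in S) (if selects t f e then q else 1).
  apply: eq_bigr => f _; rewrite -big_mkcondr -prodr_const.
  by apply: eq_bigl => e; rewrite inE.
rewrite sum_prod_indep //; last first.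
  move=> e f f' _ ff'; congr (if _ then _ else _).
  by apply: eq_forallb_in => x xe; rewrite ff'.
congr (_ * _); rewrite -prodr_const; apply: eq_bigr => e eS.
have -> : \sum_(f : Om) (if selects t f e then q else 1)
          = \sum_(f : Om) (1 + (q - 1) * (selects t f e)%:R).
  by apply: eq_bigr => f _; case: (selects t f e); rewrite ?mulr1 ?mulr0 ?addr0 // addrC subrK.
rewrite big_split /= -mulr_sumr sum_agree S_card // sumr_const -mulr_natl mulr1.
have J_neq0 : (#|J|%:R : R) ^+ s != 0 by rewrite expf_neq0 // pnatr_eq0 -lt0n.
by field; rewrite J_neq0 lt0r_neq0.
Qed.

Lemma card_few_selects_le (t : {set T} -> T -> J) (S : {set {set T}}) :
  {in S &, forall e e' : {set T}, e != e' -> [disjoint e & e']} ->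
  (forall e, e \in S -> #|e| = 2) ->
  #|[set f : Om | #|[set e in S | selects t f e]|%:R < #|S|%:R / ((#|J|%:R : R) ^+ 2 + 1)]|%:R
    <= #|Om|%:R * expR (- (#|S|%:R / (2 * #|J|%:R ^+ 2 * (#|J|%:R ^+ 2 + 1) ^+ 2))) :> R.
Proof.
move=> S_triv S_card; set rho : R := #|J|%:R ^+ 2.
have rho_ge1 : 1 <= rho by rewrite exprn_ege1 // ler1n.
have d_ge0 : 0 <= (rho + 1)^-1 by rewrite invr_ge0; lra.
apply: le_trans (@card_lt_le_expR_sum R Om (fun f => #|[set e in S | selects t f e]|)
  (#|S|%:R / (rho + 1)) _ d_ge0) _.
rewrite (sum_pow_selects t _ S_triv S_card) -/rho mulrCA ler_wpM2l //.
have -> : (rho + 1)^-1 * (#|S|%:R / (rho + 1)) = #|S|%:R / (rho + 1) ^+ 2.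
  by field; lra.
exact: chernoff_exponent_le.
Qed.

Lemma card_few_selects_lt (t : {set T} -> T -> J) (S : {set {set T}}) (x : R) :
  {in S &, forall e e' : {set T}, e != e' -> [disjoint e & e']} ->
  (forall e, e \in S -> #|e| = 2) ->
  0 < x -> 2 * ((#|J| ^ 3 + #|J|)%N%:R) ^+ 2 * ln x < #|S|%:R ->
  #|[set f : Om | #|[set e in S | selects t f e]|%:R < #|S|%:R / ((#|J|%:R : R) ^+ 2 + 1)]|%:R
    < #|Om|%:R / x.
Proof.
move=> S_triv S_card x_gt0 S_big.
apply: le_lt_trans (card_few_selects_le t S_triv S_card) _.
rewrite ltr_pM2l //.
apply: (expRN_div_lt_inv _ x_gt0).
  have J_pos : 0 < (#|J|%:R : R) by rewrite ltr0n.
  by rewrite !mulr_gt0 ?exprn_gt0 ?addr_gt0 ?exprn_gt0.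
suff -> : 2 * #|J|%:R ^+ 2 * (#|J|%:R ^+ 2 + 1) ^+ 2 = 2 * ((#|J| ^ 3 + #|J|)%N%:R : R) ^+ 2.
  exact: S_big.
by rewrite natrD !natrX; ring.
Qed.

End UniformLabelings.

Lemma exists_notin_all (R : numFieldType) (I A : finType) (B : I -> {set A}) :
  (0 < #|I|)%N -> (forall i, #|B i|%:R < #|A|%:R / #|I|%:R :> R) ->
  exists a, forall i, a \notin B i.
Proof.
move=> I_gt0 B_small.
have sum_lt : (\sum_i #|B i| < #|A|)%N.
  rewrite -(ltr_nat R) natr_sum; apply: lt_le_trans (ltr_sum _ (fun i _ => B_small i)) _.
    by case/card_gt0P: I_gt0 => i0 _; apply/hasP; exists i0; rewrite ?mem_index_enum.
  by rewrite sumr_const -(mulr_natr (_ / _)) divfK // pnatr_eq0 -lt0n.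
have card_bigcup : (#|\bigcup_i B i| <= \sum_i #|B i|)%N.
  elim/big_rec2: _ => [|i n U _ U_le]; first by rewrite cards0.
  by rewrite (leq_trans (leq_card_setU _ _)) ?leq_add2l.
have /fintype.subsetPn [a _ a_notin] : ~~ ([set: A] \subset \bigcup_i B i).
  apply: contraTN sum_lt => /subset_leq_card; rewrite cardsT -leqNgt => /leq_trans.
  exact.
by exists a => i; apply: contra a_notin => a_in; apply/bigcupP; exists i.
Qed.

Section Slots.
Variables (T : finType) (E : {set {set T}}) (n : nat).
Hypotheses (E_edges : is_edge_set E) (E_deg : max_deg_le E n.+1).

(* The edges at [x] are numbered [0, 1, ...] in enumeration order; the degree
   bound keeps these numbers below [n.+1], so [inord] does not truncate. *)
Definition slot (e : {set T}) (x : T) : 'I_n.+1 :=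
  inord (index e (enum [set e' in E | x \in e'])).

Lemma slot_inj x e e' : e \in E -> e' \in E -> x \in e -> x \in e' ->
  slot e x = slot e' x -> e = e'.
Proof.
move=> eE e'E xe xe'; pose Ex := enum [set e1 in E | x \in e1].
have Ex_mem e1 : e1 \in E -> x \in e1 -> e1 \in Ex by rewrite mem_enum inE => -> ->.
have index_lt e1 : e1 \in E -> x \in e1 -> (index e1 Ex < n.+1)%N.
  move=> e1E xe1; apply: leq_trans (E_deg x).
  by rewrite /deg cardE index_mem Ex_mem.
move/(congr1 (@nat_of_ord _)); rewrite /slot -/Ex !inordK ?index_lt // => same_index.
by rewrite -(nth_index e (Ex_mem _ eE xe)) same_index nth_index ?Ex_mem.
Qed.

Definition picked (f : {ffun T -> 'I_n.+1}) : {set {set T}} :=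
  [set e in E | selects slot f e].

Lemma picked_sub f : picked f \subset E.
Proof. by apply/fintype.subsetP => e; rewrite inE => /andP[]. Qed.

Lemma picked_matching f : is_matching (picked f).
Proof.
split=> [e|e e']; first by rewrite inE => /andP[eE _]; apply: E_edges.
rewrite !inE => /andP[eE /forall_inP e_sel] /andP[e'E /forall_inP e'_sel] e_neq.
apply/pred0P => x /=; apply/andP => -[xe xe'].
move/eqP: e_neq; apply; apply: (slot_inj eE e'E xe xe').
by rewrite -(eqP (e_sel x xe)) (eqP (e'_sel x xe')).
Qed.

Lemma picked_setIr f (S : {set {set T}}) : S \subset E ->
  picked f :&: S = [set e in S | selects slot f e].
Proof.
move=> /fintype.subsetP SE; apply/setP => e; rewrite !inE.
by case eS: (e \in S); rewrite ?andbF ?andbT //= (SE e eS).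
Qed.

End Slots.

Lemma max_deg_gt0 (T : finType) (E : {set {set T}}) (r : nat) (e : {set T}) :
  is_edge_set E -> max_deg_le E r -> e \in E -> (0 < r)%N.
Proof.
move=> E_edges E_deg eE; have /card_gt0P [x xe] : (0 < #|e|)%N by rewrite E_edges.
by apply: leq_trans (E_deg x); apply/card_gt0P; exists e; rewrite inE eE xe.
Qed.

Theorem lemma4p2 (R : realType) (T : finType) (k r : nat)
    (M : 'I_k -> {set {set T}}) :
  (forall i, is_matching (M i)) ->
  max_deg_le (\bigcup_(i < k) M i) r ->
  (forall i, 2 * ((r ^ 3 + r)%N%:R) ^+ 2 * ln (k%:R : R) < #|M i|%:R) ->
  exists H : {set {set T}},
    [/\ is_matching H, H \subset \bigcup_(i < k) M i &
        forall i, #|M i|%:R / ((r ^ 2 + 1)%N%:R) <= (#|H :&: M i|%:R : R)].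
Proof.
move=> M_match M_deg M_big.
case: k M M_match M_deg M_big => [|k] M M_match M_deg M_big.
  exists finset.set0; split; last by case.
  - by split=> [e|e f]; rewrite inE.
  - exact: finset.sub0set.
set E := \bigcup_(i < k.+1) M i.
have M_sub i : M i \subset E by apply: finset.bigcup_sup.
have E_edges : is_edge_set E by move=> e /bigcupP[i _ /(M_match i).1].
have [e0 e0_in] : exists e, e \in M ord0.
  apply/set0Pn; rewrite -card_gt0 -(ltr_nat R); apply: le_lt_trans (M_big ord0).
  by rewrite !mulr_ge0 ?sqr_ge0 ?ln_ge0 ?ler1n.
have := max_deg_gt0 E_edges M_deg (fintype.subsetP (M_sub ord0) e0 e0_in).
case: r M_deg M_big => // n M_deg M_big _.
pose Bad i := [set f : {ffun T -> 'I_n.+1} | #|[set e in M i | selects (slot E n) f e]|%:R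
  < #|M i|%:R / ((#|'I_n.+1|%:R : R) ^+ 2 + 1)].
have [f f_good] : exists f, forall i, f \notin Bad i.
  apply: (exists_notin_all (R := R)) => [|i]; first by rewrite card_ord.
  rewrite card_ord; apply: card_few_selects_lt; rewrite ?card_ord ?ltr0n //.
  - exact: (M_match i).2.
  - by move=> e /(M_match i).1.
exists (picked E f); split; [exact: picked_matching | exact: picked_sub |] => i.
by move: (f_good i); rewrite inE -leNgt card_ord picked_setIr // natrD natrX.
Qed.
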